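(* Both patterns $[12]$ and $[21]$ in $S_2$ admit bountiful width systems.
   Context: For $x=[x_1,\dots,x_N]\in S_N$ and a pattern $\sigma\in S_k$, an instance of $\sigma$ in $x$ is a tuple of positions $P=(P_1<\dots<P_k)$ with $(x_{P_1},\dots,x_{P_k})$ in the same relative order as $(\sigma(1),\dots,\sigma(k))$. A width system for $\sigma$ is a finite sequence of pairs $(a_1,b_1),\dots,(a_m,b_m)$ with $1\le a_l<b_l\le k$; it assigns to each instance $P$ the tuple $w(P)=(P_{b_1}-P_{a_1},\dots,P_{b_m}-P_{a_m})$. An instance $P$ is minimal in $x$ if $w(P)$ is lexicographically minimal among all instances of $\sigma$ in $x$; it is locally minimal if it is a minimal instance of $\sigma$ in the consecutive segment $[x_{P_1},x_{P_1+1},\dots,x_{P_k}]$. The width system is bountiful if for every $N$, every $x\in S_N$, every locally minimal instance $P$ of $\sigma$ in $x$ and every position $t$ with $P_1<t<P_k$, $t\notin\{P_1,\dots,P_k\}$, either $x_t<x_{P_j}$ for all $j$ with $P_j<t$, or $x_t>x_{P_j}$ for all $j$ with $P_j>t$. $\sigma$ admits a bountiful width system if some width system for $\sigma$ is bountiful. *)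

From mathcomp Require Import all_boot all_fingroup.
Set Implicit Arguments. Unset Strict Implicit. Unset Printing Implicit Defensive.

(* Conventions: positions and values are 0-indexed. A tuple of positions P = (P_1<...<P_k)
   is a function 'I_k -> 'I_N. *)

Definition incr (k N : nat) (P : 'I_k -> 'I_N) : Prop :=
  forall i j : 'I_k, i < j -> P i < P j.

Definition is_instance (k N : nat) (sigma : 'S_k) (x : 'S_N)
  (P : 'I_k -> 'I_N) : Prop :=
  incr P /\ forall i j : 'I_k, (x (P i) < x (P j)) = (sigma i < sigma j).

Definition width_system (k : nat) (ws : seq ('I_k * 'I_k)) : Prop :=
  forall p, p \in ws -> p.1 < p.2.

Definition width (k N : nat) (ws : seq ('I_k * 'I_k)) (P : 'I_k -> 'I_N)
  : seq nat := [seq P p.2 - P p.1 | p <- ws].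

Fixpoint lexle (s t : seq nat) : bool :=
  match s, t with
  | [::], _ => true
  | _ :: _, [::] => false
  | a :: s', b :: t' => (a < b) || ((a == b) && lexle s' t')
  end.

Definition minimal_in_window (k N : nat) (sigma : 'S_k) (ws : seq ('I_k * 'I_k))
  (x : 'S_N) (lo hi : nat) (P : 'I_k -> 'I_N) : Prop :=
  is_instance sigma x P /\
  forall Q : 'I_k -> 'I_N, is_instance sigma x Q ->
    (forall i, lo <= Q i <= hi) -> lexle (width ws P) (width ws Q).

Definition minimal_instance (k N : nat) (sigma : 'S_k) (ws : seq ('I_k * 'I_k))
  (x : 'S_N) (P : 'I_k -> 'I_N) : Prop :=
  minimal_in_window sigma ws x 0 N P.

(* Locally minimal: minimal instance in the consecutive segment
   x_{P_1}, ..., x_{P_k}.  Widths are differences of positions, hence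
   invariant under the shift re-indexing of the segment, so this is
   minimality among instances of x lying in positions [P_1, P_k]. *)
Definition locally_minimal (k N : nat) (sigma : 'S_k) (ws : seq ('I_k * 'I_k))
  (x : 'S_N) (P : 'I_k -> 'I_N) : Prop :=
  is_instance sigma x P /\
  forall (i j : 'I_k), (forall l, P i <= P l) -> (forall l, P l <= P j) ->
    minimal_in_window sigma ws x (P i) (P j) P.

Definition bountiful (k : nat) (sigma : 'S_k) (ws : seq ('I_k * 'I_k)) : Prop :=
  forall (N : nat) (x : 'S_N) (P : 'I_k -> 'I_N),
    locally_minimal sigma ws x P ->
    forall t : 'I_N,
      (exists i j : 'I_k, P i < t < P j) ->   (* P_1 < t < P_k *)
      (forall j : 'I_k, P j != t) ->
      (forall j : 'I_k, P j < t -> x t < x (P j)) \/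
      (forall j : 'I_k, t < P j -> x (P j) < x t).

Definition admits_bountiful (k : nat) (sigma : 'S_k) : Prop :=
  exists ws : seq ('I_k * 'I_k), width_system ws /\ bountiful sigma ws.

From mathcomp Require Import all_boot all_fingroup.

Set Implicit Arguments.
Unset Strict Implicit.
Unset Printing Implicit Defensive.

(* The width system measuring the distance [P_2 - P_1] works for both
   patterns.  If a position [t] strictly between the two entries of a locally
   minimal instance [P] satisfied neither alternative, its value would lie
   strictly between [x_(P_1)] and [x_(P_2)], so [(P_1, t)] would be an instance
   of the same pattern inside the segment and of smaller width. *)

Lemma ord2P (l : 'I_2) : l = ord0 \/ l = ord_max.
Proof.
by case: l => [[|[|//]]] lt_l2; [left | right]; apply: val_inj.
Qed.

Definition span2 : seq ('I_2 * 'I_2) := [:: (ord0, ord_max)].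

Lemma width_system_span2 : width_system span2.
Proof. by move=> p; rewrite inE => /eqP ->. Qed.

Definition pos2 (N : nat) (a b : 'I_N) : 'I_2 -> 'I_N :=
  fun l => if val l == 0 then a else b.

Lemma is_instance2 (sigma : 'S_2) (N : nat) (x : 'S_N) (a b : 'I_N) :
  a < b -> (x a < x b) = (sigma ord0 < sigma ord_max) ->
  is_instance sigma x (pos2 a b).
Proof.
move=> lt_ab x_sigma; split.
  by move=> i j; case: (ord2P i) => ->; case: (ord2P j) => ->; rewrite /pos2 /=.
have x_ab : x a != x b :> nat by rewrite val_eqE (inj_eq perm_inj) neq_ltn lt_ab.
have s_01 : sigma ord0 != sigma ord_max :> nat by rewrite val_eqE (inj_eq perm_inj).
move=> i j; rewrite /pos2.
case: (ord2P i) => ->; case: (ord2P j) => -> //=; rewrite ?ltnn //.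
have ltn_flip m n : m != n -> (n < m) = ~~ (m < n).
  by move=> ne_mn; rewrite ltnNge leq_eqVlt (negbTE ne_mn).
by rewrite (ltn_flip _ _ x_ab) (ltn_flip _ _ s_01) x_sigma.
Qed.

Lemma lexle_span2 (N : nat) (P Q : 'I_2 -> 'I_N) :
  lexle (width span2 P) (width span2 Q) =
  (P ord_max - P ord0 <= Q ord_max - Q ord0).
Proof. by rewrite /= andbT [RHS]leq_eqVlt orbC. Qed.

Lemma locally_minimal2_no_inner_value (sigma : 'S_2) (N : nat) (x : 'S_N)
    (P : 'I_2 -> 'I_N) (t : 'I_N) :
  locally_minimal sigma span2 x P -> P ord0 < t < P ord_max ->
  ~ (x (P ord0) < x t < x (P ord_max)).
Proof.
move=> [[incP ordP] minP] /andP[lt_0t lt_t1] /andP[xlt_0t xlt_t1].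
have P0_min l : P ord0 <= P l.
  by case: (ord2P l) => ->; last exact/ltnW/incP.
have P1_max l : P l <= P ord_max.
  by case: (ord2P l) => ->; first exact/ltnW/incP.
have inst_Q : is_instance sigma x (pos2 (P ord0) t).
  by apply: is_instance2 => //; rewrite -ordP xlt_0t (ltn_trans xlt_0t xlt_t1).
have Q_in_window l : P ord0 <= pos2 (P ord0) t l <= P ord_max.
  by rewrite /pos2; case: ifP => _;
     rewrite ?P0_min ?P1_max ?(ltnW lt_0t) ?(ltnW lt_t1).
have := (minP ord0 ord_max P0_min P1_max).2 _ inst_Q Q_in_window.
by rewrite lexle_span2 /pos2 /= leqNgt ltn_sub2r // (ltn_trans lt_0t lt_t1).
Qed.

Lemma bountiful_span2 (sigma : 'S_2) : bountiful sigma span2.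
Proof.
move=> N x P lmP t [i [j /andP[lt_it lt_tj]]] t_notin_P.
have [[incP _] _] := lmP.
have lt_0t : P ord0 < t.
  by case: (ord2P i) lt_it => -> // lt_1t; apply: ltn_trans lt_1t; apply: incP.
have lt_t1 : t < P ord_max.
  by case: (ord2P j) lt_tj => -> // lt_t0; apply: ltn_trans lt_t0 (incP _ _ _).
have x_ne l : x t != x (P l) by rewrite (inj_eq perm_inj) eq_sym t_notin_P.
case: (ltnP (x t) (x (P ord0))) => [xlt_t0 | xge_t0].
  left=> l lt_lt; case: (ord2P l) lt_lt => -> // lt_1t.
  by move: (ltn_trans lt_1t lt_t1); rewrite ltnn.
case: (ltnP (x (P ord_max)) (x t)) => [xlt_1t | xge_1t].
  right=> l lt_tl; case: (ord2P l) lt_tl => -> // lt_t0.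
  by move: (ltn_trans lt_t0 lt_0t); rewrite ltnn.
exfalso; apply: (locally_minimal2_no_inner_value (t := t) lmP).
  by rewrite lt_0t lt_t1.
by rewrite !ltn_neqAle xge_t0 xge_1t eq_sym x_ne x_ne.
Qed.

Theorem mainTheorem14 : forall sigma : 'S_2, admits_bountiful sigma.
Proof.
move=> sigma; exists span2.
by split; [exact: width_system_span2 | exact: bountiful_span2].
Qed.
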